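(* Let $N\in\{2,3\}$. If $z\in C^2(\mathbb{R})$ satisfies $$-z''(t)+(N-4)z'(t)+(2N-4)z(t)=\frac{N-1}{2}\,z(t)^2\qquad (t\in\mathbb{R})$$ and $\lim_{t\to-\infty}e^tz(t)=0=\lim_{t\to+\infty}e^tz(t)$, then $z\equiv0$. *)

From Stdlib Require Import Reals.
From Coquelicot Require Import Coquelicot.
Open Scope R_scope.

Definition C2 (z : R -> R) : Prop :=
  (forall t, ex_derive z t) /\
  (forall t, ex_derive (Derive z) t) /\
  (forall t, continuous (Derive (Derive z)) t).

(* Along a solution, W = e^{2t} (-z' + (n-2) z) and
   U = -e^{-(n-2)t} (z' + 2z) are nondecreasing, and the decay of e^t z at -oo
   (resp. +oo) forces W >= 0 (resp. U <= 0): otherwise e^t z would be driven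
   exponentially to -oo.  Hence z >= 0, |z'| <= 2z, and V = e^{-(n-2)t} z is
   nonincreasing with V' = -e^{-nt} W.  Integrating W' = (n-1)/2 e^{(2n-2)t} V^2
   over [t-1, t] gives W >= k e^{(2n-2)t} V^2 with k = (1 - e^{-2})/4, so V obeys
   the Riccati inequality V' <= -k e^{(n-2)t} V^2 and 1/V grows at least like
   k \int e^{(n-2)t}.  For n = 2 this growth is unbounded into the past, which
   forces V = 0.  For n = 3 it only bounds z; then the energy
   Q = e^t (3z'^2 + 2zz' - 6z^2 + 2z^3), nonincreasing with
   Q' = -e^t (z'^2 + 2z^2) and dominated by a multiple of e^t z, vanishes at both
   ends, hence identically, and so does z. *)

From Stdlib Require Import Reals Lra Psatz.
From Coquelicot Require Import Coquelicot.
Open Scope R_scope.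

Lemma exp_le_exp x y : x <= y -> exp x <= exp y.
Proof.
intros [Hlt | ->]; [left; apply exp_increasing, Hlt | apply Rle_refl].
Qed.

Lemma exp_plus_eq a b c : a + b = c -> exp a * exp b = exp c.
Proof. intros <-; symmetry; apply exp_plus. Qed.

Lemma derive_nonneg_le (f df : R -> R) a b : a <= b ->
  (forall x, a <= x <= b -> is_derive f x (df x)) ->
  (forall x, a <= x <= b -> 0 <= df x) -> f a <= f b.
Proof.
intros Hab Hd Hpos.
destruct (MVT_gen f a b df) as [c [Hc Hmvt]];
  rewrite ?Rmin_left, ?Rmax_right in * by lra.
- intros x Hx; apply Hd; lra.
- intros x Hx; apply continuity_pt_filterlim, (ex_derive_continuous (V := R_NormedModule)).
  eexists; apply Hd; lra.
- assert (0 <= df c) by (apply Hpos; lra). nra.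
Qed.

Lemma derive_le_sub_le (f g df dg : R -> R) a b : a <= b ->
  (forall x, a <= x <= b -> is_derive f x (df x)) ->
  (forall x, a <= x <= b -> is_derive g x (dg x)) ->
  (forall x, a <= x <= b -> df x <= dg x) -> f b - f a <= g b - g a.
Proof.
intros Hab Hf Hg Hle.
enough (g a - f a <= g b - f b) by lra.
apply (derive_nonneg_le (fun x => g x - f x) (fun x => dg x - df x)); [lra | |].
- intros x Hx; apply (is_derive_minus g f); auto.
- intros x Hx; specialize (Hle x Hx); lra.
Qed.

Lemma derive_nonpos_le (f df : R -> R) a b : a <= b ->
  (forall x, is_derive f x (df x)) -> (forall x, df x <= 0) -> f b <= f a.
Proof.
intros Hab Hd Hneg.
enough (f b - f a <= 0 - 0) by lra.
apply (derive_le_sub_le f (fun _ => 0) df (fun _ => 0)); auto.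
intros; auto_derive; reflexivity.
Qed.

Lemma is_lim_m_infty_opp (f : R -> R) l :
  is_lim f m_infty l -> is_lim (fun t => f (- t)) p_infty l.
Proof.
intros Hf. apply (is_lim_comp f (fun t => - t) p_infty l m_infty Hf).
- apply (is_lim_opp (fun t => t) p_infty p_infty), is_lim_id.
- exists 0; intros; discriminate.
Qed.

Lemma not_is_lim0_of_exp_bound (f : R -> R) (A C a b t0 : R) :
  0 <= a -> 0 < b -> 0 < C ->
  (forall t, t0 <= t -> f t <= A * exp (- a * t) - C * exp (b * t)) ->
  ~ is_lim f p_infty 0.
Proof.
intros Ha Hb HC Hbound Hlim.
apply is_lim_spec in Hlim.
destruct (Hlim (mkposreal 1 Rlt_0_1)) as [M HM]; simpl in HM.
set (q := (Rabs A + 1) / (C * b)).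
assert (Hq : 0 < q) by (unfold q; pose proof (Rabs_pos A); apply Rdiv_lt_0_compat; nra).
set (t := Rabs t0 + Rabs M + 1 + q).
pose proof (Rle_abs t0); pose proof (Rle_abs M); pose proof (Rabs_pos t0); pose proof (Rabs_pos M).
assert (HCb : Rabs A + 1 <= C * b * t).
{ replace (Rabs A + 1) with (C * b * q) by (unfold q; field; lra).
  apply Rmult_le_compat_l; unfold t; nra. }
assert (Hexp1 : exp (- a * t) <= 1)
  by (rewrite <- exp_0; apply exp_le_exp; unfold t; nra).
assert (Hexp2 : 1 + b * t <= exp (b * t)) by apply exp_ineq1_le.
assert (HA : A * exp (- a * t) <= Rabs A).
{ pose proof (exp_pos (- a * t)). pose proof (Rle_abs A). pose proof (Rabs_pos A).
  apply Rle_trans with (Rabs A * exp (- a * t)); [apply Rmult_le_compat_r|]; nra. }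
specialize (HM t ltac:(unfold t; lra)); specialize (Hbound t ltac:(unfold t; lra)).
rewrite Rminus_0_r in HM; apply Rabs_def2 in HM. nra.
Qed.

Lemma nonincreasing_lim0_eq0 (f : R -> R) :
  (forall a b, a <= b -> f b <= f a) ->
  is_lim f m_infty 0 -> is_lim f p_infty 0 -> forall t, f t = 0.
Proof.
intros Hf Hm Hp t; apply Rle_antisym.
- assert (H : Rbar_le (f t) 0).
  { apply (is_lim_le_loc (fun _ => f t) f m_infty); [| apply is_lim_const | exact Hm].
    exists t; intros x Hx; apply Hf; lra. }
  exact H.
- assert (H : Rbar_le 0 (f t)).
  { apply (is_lim_le_loc f (fun _ => f t) p_infty); [| exact Hp | apply is_lim_const].
    exists t; intros x Hx; apply Hf; lra. }
  exact H.
Qed.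

Lemma riccati_inv_growth (v dv g G : R -> R) k s t : s <= t ->
  (forall r, is_derive v r (dv r)) -> (forall r, is_derive G r (g r)) ->
  (forall r, dv r <= - k * g r * v r ^ 2) -> (forall r, s <= r <= t -> 0 < v r) ->
  k * (G t - G s) <= / v t - / v s.
Proof.
intros Hst Hv HG Hric Hpos.
replace (k * (G t - G s)) with (k * G t - k * G s) by ring.
apply (derive_le_sub_le (fun r => k * G r) (fun r => / v r) (fun r => k * g r)
  (fun r => - dv r / v r ^ 2)); auto.
- intros r _; apply is_derive_scal, HG.
- intros r Hr; apply is_derive_inv; [apply Hv | specialize (Hpos r Hr); lra].
- intros r Hr; specialize (Hpos r Hr); specialize (Hric r).
  assert (Hv2 : 0 < v r ^ 2) by (apply pow_lt; lra).
  apply Rmult_le_reg_r with (v r ^ 2); [exact Hv2|].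
  replace (- dv r / v r ^ 2 * v r ^ 2) with (- dv r) by (field; lra). lra.
Qed.

Lemma is_lim_0_of_abs_le (f g : R -> R) x K :
  (forall t, Rabs (f t) <= K * g t) -> is_lim g x 0 -> is_lim f x 0.
Proof.
intros Hle Hg.
assert (HK : is_lim (fun t => K * g t) x 0).
{ replace (Finite 0) with (Rbar_mult K 0) by (simpl; f_equal; ring).
  apply is_lim_scal_l, Hg. }
apply (is_lim_le_le_loc (fun t => - (K * g t)) (fun t => K * g t)); [| | exact HK].
- apply filter_forall; intros t; apply Rabs_le_between, Hle.
- replace (Finite 0) with (Rbar_opp 0) by (simpl; f_equal; ring).
  apply is_lim_opp, HK.
Qed.

Lemma energy_poly_bound a x B : 0 <= x <= B -> Rabs a <= 2 * x ->
  Rabs (3 * a ^ 2 + 2 * x * a - 6 * x ^ 2 + 2 * x ^ 3) <= (10 + 2 * B) * B * x.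
Proof.
intros Hx Ha; apply Rabs_le_between in Ha.
assert (Ha2 : a ^ 2 <= 4 * x ^ 2) by nra.
assert (Hxa : - (2 * x ^ 2) <= x * a <= 2 * x ^ 2) by (split; nra).
assert (Hx3 : 0 <= x ^ 3 <= B * x ^ 2) by (split; nra).
assert (Hx2 : x ^ 2 <= B * x) by nra.
apply Rabs_le; split; nra.
Qed.

Section Solution.
Variables (z : R -> R) (n : R).
Hypothesis z_derive : forall t, is_derive z t (Derive z t).
Hypothesis z'_derive : forall t, is_derive (Derive z) t (Derive (Derive z) t).
Hypothesis ode : forall t, Derive (Derive z) t =
  (n - 4) * Derive z t + (2 * n - 4) * z t - (n - 1) / 2 * z t ^ 2.
Hypothesis n_range : 2 <= n <= 3.
Hypothesis lim_m_infty : is_lim (fun t => exp t * z t) m_infty 0.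
Hypothesis lim_p_infty : is_lim (fun t => exp t * z t) p_infty 0.

Ltac auto_derive_ode :=
  auto_derive;
  [ repeat apply conj; try exact I;
    match goal with
    | |- ex_derive (fun x => Derive z x) ?t => exact (ex_intro _ _ (z'_derive t))
    | |- ex_derive (fun x => z x) ?t => exact (ex_intro _ _ (z_derive t))
    end
  | change (fun x => Derive z x) with (Derive z); change (fun x => z x) with z;
    rewrite ?ode ].

Let W t := exp (2 * t) * (- Derive z t + (n - 2) * z t).
Let U t := - exp (- (n - 2) * t) * (Derive z t + 2 * z t).
Let V t := exp (- (n - 2) * t) * z t.
Let Y t := exp (2 * t) * z t.

Lemma W_derive t : is_derive W t ((n - 1) / 2 * exp (2 * t) * z t ^ 2).
Proof. unfold W; auto_derive_ode; ring. Qed.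

Lemma U_derive t : is_derive U t ((n - 1) / 2 * exp (- (n - 2) * t) * z t ^ 2).
Proof. unfold U; auto_derive_ode; ring. Qed.

Lemma V_derive t : is_derive V t (- exp (- n * t) * W t).
Proof.
unfold V, W; auto_derive_ode.
rewrite <- (exp_plus_eq (- n * t) (2 * t)) by ring. ring.
Qed.

Lemma Y_derive t : is_derive Y t (- exp (n * t) * U t).
Proof.
unfold Y, U; auto_derive_ode.
rewrite <- (exp_plus_eq (n * t) (- (n - 2) * t)) by ring. ring.
Qed.

Lemma W_nondecreasing a b : a <= b -> W a <= W b.
Proof.
intros Hab.
apply (derive_nonneg_le W (fun x => (n - 1) / 2 * exp (2 * x) * z x ^ 2) a b Hab);
  [intros; apply W_derive |].
intros x _; pose proof (exp_pos (2 * x)); pose proof (pow2_ge_0 (z x)).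
apply Rmult_le_pos; [apply Rmult_le_pos|]; lra.
Qed.

Lemma U_nondecreasing a b : a <= b -> U a <= U b.
Proof.
intros Hab.
apply (derive_nonneg_le U (fun x => (n - 1) / 2 * exp (- (n - 2) * x) * z x ^ 2) a b Hab);
  [intros; apply U_derive |].
intros x _; pose proof (exp_pos (- (n - 2) * x)); pose proof (pow2_ge_0 (z x)).
apply Rmult_le_pos; [apply Rmult_le_pos|]; lra.
Qed.

Lemma W_nonneg t0 : 0 <= W t0.
Proof.
apply Rnot_lt_le; intros HW; set (c := - W t0).
set (A := V t0 + c / n * exp (- n * t0)).
assert (HV : forall t, t <= t0 -> V t <= A - c / n * exp (- n * t)).
{ intros t Ht.
  enough (- c / n * exp (- n * t0) - - c / n * exp (- n * t) <= V t0 - V t)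
    by (unfold A; lra).
  apply (derive_le_sub_le (fun s => - c / n * exp (- n * s)) V
    (fun s => c * exp (- n * s)) (fun s => - exp (- n * s) * W s)); [exact Ht | | |].
  - intros s _; auto_derive; [exact I | field; lra].
  - intros s _; apply V_derive.
  - intros s Hs; pose proof (W_nondecreasing s t0 (proj2 Hs)); pose proof (exp_pos (- n * s)).
    unfold c; nra. }
apply (not_is_lim0_of_exp_bound (fun s => exp (- s) * z (- s)) A (c / n) (n - 1) 1 (- t0)).
- lra.
- lra.
- unfold c; apply Rdiv_lt_0_compat; lra.
- intros s Hs; specialize (HV (- s) ltac:(lra)).
  replace (exp (- s) * z (- s)) with (exp (- (n - 1) * s) * V (- s))
    by (unfold V; rewrite <- Rmult_assoc, (exp_plus_eq _ _ (- s)) by ring; reflexivity).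
  rewrite <- (exp_plus_eq (- (n - 1) * s) (- n * - s) (1 * s)) by ring.
  pose proof (exp_pos (- (n - 1) * s)). nra.
- exact (is_lim_m_infty_opp _ _ lim_m_infty).
Qed.

Lemma U_nonpos t0 : U t0 <= 0.
Proof.
apply Rnot_lt_le; intros HU; set (c := U t0).
set (A := Y t0 + c / n * exp (n * t0)).
assert (HY : forall t, t0 <= t -> Y t <= A - c / n * exp (n * t)).
{ intros t Ht.
  enough (Y t - Y t0 <= - c / n * exp (n * t) - - c / n * exp (n * t0))
    by (unfold A; lra).
  apply (derive_le_sub_le Y (fun s => - c / n * exp (n * s))
    (fun s => - exp (n * s) * U s) (fun s => - c * exp (n * s))); [exact Ht | | |].
  - intros s _; apply Y_derive.
  - intros s _; auto_derive; [exact I | field; lra].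
  - intros s Hs; pose proof (U_nondecreasing t0 s (proj1 Hs)); pose proof (exp_pos (n * s)).
    unfold c; nra. }
apply (not_is_lim0_of_exp_bound (fun t => exp t * z t) A (c / n) 1 (n - 1) t0).
- lra.
- lra.
- unfold c; apply Rdiv_lt_0_compat; lra.
- intros t Ht; specialize (HY t Ht).
  replace (- (1) * t) with (- t) by ring.
  replace (exp t * z t) with (exp (- t) * Y t)
    by (unfold Y; rewrite <- Rmult_assoc, (exp_plus_eq _ _ t) by ring; reflexivity).
  rewrite <- (exp_plus_eq (- t) (n * t) ((n - 1) * t)) by ring.
  pose proof (exp_pos (- t)). nra.
- exact lim_p_infty.
Qed.

Lemma Derive_z_le t : Derive z t <= (n - 2) * z t.
Proof. pose proof (W_nonneg t); pose proof (exp_pos (2 * t)); unfold W in *; nra. Qed.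

Lemma Derive_z_ge t : - 2 * z t <= Derive z t.
Proof. pose proof (U_nonpos t); pose proof (exp_pos (- (n - 2) * t)); unfold U in *; nra. Qed.

Lemma z_nonneg t : 0 <= z t.
Proof. pose proof (Derive_z_le t); pose proof (Derive_z_ge t); nra. Qed.

Lemma Rabs_Derive_z_le t : Rabs (Derive z t) <= 2 * z t.
Proof.
pose proof (Derive_z_le t); pose proof (Derive_z_ge t); pose proof (z_nonneg t).
apply Rabs_le; nra.
Qed.

Lemma V_nonincreasing a b : a <= b -> V b <= V a.
Proof.
intros Hab; apply (derive_nonpos_le V (fun t => - exp (- n * t) * W t) a b Hab V_derive).
intros t; pose proof (exp_pos (- n * t)); pose proof (W_nonneg t); nra.
Qed.

Lemma V_nonneg t : 0 <= V t.
Proof. pose proof (z_nonneg t); pose proof (exp_pos (- (n - 2) * t)); unfold V; nra. Qed.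

Let k := (1 - exp (-2)) / 4.

Lemma k_pos : 0 < k.
Proof.
unfold k; assert (exp (-2) < 1) by (rewrite <- exp_0; apply exp_increasing; lra). lra.
Qed.

Lemma W_lower t : k * exp ((2 * n - 2) * t) * V t ^ 2 <= W t.
Proof.
assert (Hinc : V t ^ 2 / 4 * exp ((2 * n - 2) * t) - V t ^ 2 / 4 * exp ((2 * n - 2) * (t - 1))
               <= W t - W (t - 1)).
{ apply (derive_le_sub_le (fun s => V t ^ 2 / 4 * exp ((2 * n - 2) * s)) W
    (fun s => (n - 1) / 2 * exp ((2 * n - 2) * s) * V t ^ 2)
    (fun s => (n - 1) / 2 * exp (2 * s) * z s ^ 2)); [lra | | intros; apply W_derive |].
  - intros s _; auto_derive; [exact I | field].
  - intros s Hs.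
    assert (Hid : exp (2 * s) * z s ^ 2 = exp ((2 * n - 2) * s) * V s ^ 2)
      by (unfold V; rewrite <- (exp_plus_eq (n * s) (- (n - 2) * s) (2 * s)),
            <- (exp_plus_eq ((2 * n - 2) * s) (- (n - 2) * s) (n * s)) by ring; ring).
    rewrite Rmult_assoc, Rmult_assoc, Hid.
    pose proof (V_nonincreasing s t (proj2 Hs)); pose proof (V_nonneg t).
    pose proof (exp_pos ((2 * n - 2) * s)).
    apply Rmult_le_compat_l; [lra | apply Rmult_le_compat_l; nra]. }
rewrite <- (exp_plus_eq ((2 * n - 2) * t) (- (2 * n - 2)) ((2 * n - 2) * (t - 1))) in Hinc
  by ring.
assert (Hexp : exp (- (2 * n - 2)) <= exp (-2)) by (apply exp_le_exp; lra).
assert (0 <= exp ((2 * n - 2) * t) * V t ^ 2 * (exp (-2) - exp (- (2 * n - 2)))).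
{ pose proof (exp_pos ((2 * n - 2) * t)); pose proof (pow2_ge_0 (V t)).
  apply Rmult_le_pos; [apply Rmult_le_pos|]; lra. }
pose proof (W_nonneg (t - 1)).
unfold k; nra.
Qed.

Lemma V_riccati t : - exp (- n * t) * W t <= - k * exp ((n - 2) * t) * V t ^ 2.
Proof.
pose proof (W_lower t); pose proof (exp_pos (- n * t)).
rewrite <- (exp_plus_eq (- n * t) ((2 * n - 2) * t) ((n - 2) * t)) by ring.
nra.
Qed.

Lemma solution_eq0_n2 : n = 2 -> forall t, z t = 0.
Proof.
intros Hn t; destruct (z_nonneg t) as [Hz | Hz]; [exfalso | auto].
assert (HVt : 0 < V t)
  by (unfold V; replace (- (n - 2) * t) with 0 by (rewrite Hn; ring); rewrite exp_0; lra).
pose proof k_pos as Hk.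
set (s := t - / (k * V t) - 1).
assert (Hs : s <= t) by (unfold s; pose proof (Rinv_0_lt_compat (k * V t)); nra).
assert (Hgrowth : k * (t - s) <= / V t - / V s).
{ apply (riccati_inv_growth V (fun r => - exp (- n * r) * W r) (fun _ => 1) (fun r => r));
    [exact Hs | exact V_derive | intros; auto_derive; reflexivity | |].
  - intros r; pose proof (V_riccati r) as HR.
    replace ((n - 2) * r) with 0 in HR by (rewrite Hn; ring); rewrite exp_0 in HR; lra.
  - intros r Hr; pose proof (V_nonincreasing r t (proj2 Hr)); lra. }
pose proof (V_nonincreasing s t Hs).
assert (0 < / V s) by (apply Rinv_0_lt_compat; lra).
assert (k * (t - s) = / V t + k) by (unfold s; field; lra).
lra.
Qed.

Section Three.
Hypothesis n_eq3 : n = 3.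

Let B := / (k * (1 - exp (-1))).

Lemma k_mul_pos : 0 < k * (1 - exp (-1)).
Proof.
assert (exp (-1) < 1) by (rewrite <- exp_0; apply exp_increasing; lra).
pose proof k_pos; nra.
Qed.

Lemma z_le_B t : z t <= B.
Proof.
pose proof k_mul_pos as HB.
destruct (z_nonneg t) as [Hz | <-]; [| left; apply Rinv_0_lt_compat, HB].
assert (HVt : 0 < V t) by (unfold V; pose proof (exp_pos (- (n - 2) * t)); nra).
assert (Hgrowth : k * (exp ((n - 2) * t) - exp ((n - 2) * (t - 1))) <= / V t - / V (t - 1)).
{ apply (riccati_inv_growth V (fun r => - exp (- n * r) * W r) (fun r => exp ((n - 2) * r))
    (fun r => exp ((n - 2) * r))); [lra | exact V_derive | | exact V_riccati |].
  - intros r; auto_derive; [exact I | rewrite n_eq3; ring].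
  - intros r Hr; pose proof (V_nonincreasing r t (proj2 Hr)); lra. }
pose proof (V_nonincreasing (t - 1) t ltac:(lra)).
assert (0 < / V (t - 1)) by (apply Rinv_0_lt_compat; lra).
rewrite <- (exp_plus_eq ((n - 2) * t) (-1) ((n - 2) * (t - 1))) in Hgrowth by (rewrite n_eq3; ring).
assert (Hz_eq : z t = exp ((n - 2) * t) * V t)
  by (unfold V; rewrite <- Rmult_assoc, (exp_plus_eq _ _ 0), exp_0 by ring; ring).
pose proof k_pos; pose proof (exp_pos ((n - 2) * t)).
assert (Hkz : k * (1 - exp (-1)) * z t <= 1).
{ rewrite Hz_eq.
  apply Rmult_le_reg_r with (/ V t); [apply Rinv_0_lt_compat; lra|].
  replace (k * (1 - exp (-1)) * (exp ((n - 2) * t) * V t) * / V t)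
    with (k * (exp ((n - 2) * t) - exp ((n - 2) * t) * exp (-1))) by (field; lra).
  lra. }
unfold B; apply Rmult_le_reg_l with (k * (1 - exp (-1))); [exact HB|].
rewrite Rinv_r; lra.
Qed.

Let Q t := exp t * (3 * Derive z t ^ 2 + 2 * z t * Derive z t - 6 * z t ^ 2 + 2 * z t ^ 3).

Lemma Q_derive t : is_derive Q t (- exp t * (Derive z t ^ 2 + 2 * z t ^ 2)).
Proof. unfold Q; auto_derive_ode; rewrite n_eq3; field. Qed.

Lemma Q_nonincreasing a b : a <= b -> Q b <= Q a.
Proof.
intros Hab; apply (derive_nonpos_le Q _ a b Hab Q_derive).
intros t; pose proof (exp_pos t); pose proof (pow2_ge_0 (Derive z t));
  pose proof (pow2_ge_0 (z t)); nra.
Qed.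

Lemma Rabs_Q_le t : Rabs (Q t) <= (10 + 2 * B) * B * (exp t * z t).
Proof.
unfold Q; rewrite Rabs_mult, (Rabs_pos_eq (exp t)) by (left; apply exp_pos).
pose proof (energy_poly_bound (Derive z t) (z t) B
  (conj (z_nonneg t) (z_le_B t)) (Rabs_Derive_z_le t)).
pose proof (exp_pos t).
replace ((10 + 2 * B) * B * (exp t * z t)) with (exp t * ((10 + 2 * B) * B * z t)) by ring.
apply Rmult_le_compat_l; lra.
Qed.

Lemma solution_eq0_n3 t : z t = 0.
Proof.
assert (HQ0 : forall r, Q r = 0).
{ apply nonincreasing_lim0_eq0; [exact Q_nonincreasing | |];
    apply (is_lim_0_of_abs_le Q (fun r => exp r * z r) _ _ Rabs_Q_le);
    [exact lim_m_infty | exact lim_p_infty]. }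
assert (HQ' : is_derive Q t 0).
{ apply (is_derive_ext (fun _ => 0)); [intros; symmetry; apply HQ0 | auto_derive; reflexivity]. }
pose proof (is_derive_unique _ _ _ HQ') as H1.
rewrite (is_derive_unique _ _ _ (Q_derive t)) in H1.
assert (Hsum : Derive z t ^ 2 + 2 * z t ^ 2 = 0).
{ apply (Rmult_eq_reg_l (- exp t)); [rewrite Rmult_0_r; exact H1 | pose proof (exp_pos t); lra]. }
pose proof (pow2_ge_0 (Derive z t)); pose proof (pow2_ge_0 (z t)).
assert (z t ^ 2 = 0) by lra.
nra.
Qed.

End Three.

Lemma solution_eq0 : n = 2 \/ n = 3 -> forall t, z t = 0.
Proof. intros [Hn | Hn]; [exact (solution_eq0_n2 Hn) | exact (solution_eq0_n3 Hn)]. Qed.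

End Solution.

Theorem theorem3p7 (N : nat) (HN : N = 2%nat \/ N = 3%nat) (z : R -> R)
  (Hz : C2 z)
  (Heq : forall t : R,
      - Derive (Derive z) t + (INR N - 4) * Derive z t + (2 * INR N - 4) * z t
      = (INR N - 1) / 2 * (z t) ^ 2)
  (Hlim_minus : is_lim (fun t => exp t * z t) m_infty 0)
  (Hlim_plus : is_lim (fun t => exp t * z t) p_infty 0) :
  forall t : R, z t = 0.
Proof.
destruct Hz as [Hz1 [Hz2 _]].
assert (HN' : INR N = 2 \/ INR N = 3) by (destruct HN as [-> | ->]; [left | right]; simpl; lra).
apply (solution_eq0 z (INR N)); [| | | lra | exact Hlim_minus | exact Hlim_plus | exact HN'].
- intros t; apply Derive_correct, Hz1.
- intros t; apply Derive_correct, Hz2.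
- intros t; specialize (Heq t); lra.
Qed.
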